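(* Let $U$ be the subalgebra of the $q$-shuffle algebra $(\mathbb V,\star)$ generated by $x$ and $y$. Then every alternating word of $\mathbb V$ is contained in $U$. Here a word $v_1v_2\cdots v_n$ is alternating if $n\ge 1$ and $v_{i-1}\ne v_i$ for $2\le i\le n$.
   Context: Let $\mathbb F$ be a field and let $q\in\mathbb F$ be nonzero and not a root of unity. Let $\mathbb V$ be the free associative $\mathbb F$-algebra on noncommuting generators $x,y$. Its words (products of letters $x,y$, including the empty word $1$) form a basis. Set $\langle x,x\rangle=\langle y,y\rangle=2$ and $\langle x,y\rangle=\langle y,x\rangle=-2$. The $q$-shuffle product $\star$ on $\mathbb V$ is the bilinear product determined as follows: - $1\star v=v\star 1=v$; - for nontrivial words $u=u_1\cdots u_r$ and $v=v_1\cdots v_s$ (letters $u_i,v_j$; juxtaposition is concatenation), $$u\star v=u_1\big((u_2\cdots u_r)\star v\big)+v_1\big(u\star (v_2\cdots v_s)\big)q^{\langle u_1,v_1\rangle+\cdots+\langle u_r,v_1\rangle}.$$ This makes $\mathbb V$ an associative algebra, the $q$-shuffle algebra. *)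

From HB Require Import structures.
From mathcomp Require Import all_boot all_order all_algebra.
Set Implicit Arguments. Unset Strict Implicit. Unset Printing Implicit Defensive.
Import Order.TTheory GRing.Theory Num.Theory.
Local Open Scope ring_scope.

Definition letter := bool.
Definition word := seq letter.
Definition lx : letter := true.
Definition ly : letter := false.

Section QShuffle.
Variables (F : fieldType) (q : F).

(* An element of V is represented by a formal linear combination of words,
   i.e. a finite list of (coefficient, word) pairs.  Its meaning is its
   coefficient function [ev]; two combinations denote the same element of V
   iff their coefficient functions agree. *)
Definition combo := seq (F * word).

Definition ev (c : combo) (w : word) : F :=
  \sum_(p <- c) (if p.2 == w then p.1 else 0).

Definition scal (k : F) (c : combo) : combo := [seq (k * p.1, p.2) | p <- c].
Definition pre (a : letter) (c : combo) : combo := [seq (p.1, a :: p.2) | p <- c].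
Definition wrd (w : word) : combo := [:: (1, w)].

Definition pair (a b : letter) : int := if a == b then 2 else - 2.

Fixpoint wsh (u : word) : word -> combo :=
  match u with
  | [::] => wrd
  | a :: u' =>
      fix shv (v : word) : combo :=
        match v with
        | [::] => wrd (a :: u')
        | b :: v' =>
            pre a (wsh u' v) ++
            scal (q ^ (\sum_(c <- a :: u') pair c b)) (pre b (shv v'))
        end
  end.

Definition star (c d : combo) : combo :=
  flatten [seq scal (p1.1 * p2.1) (wsh p1.2 p2.2) | p1 <- c, p2 <- d].

Inductive inU : combo -> Prop :=
| inU_one : inU (wrd [::])
| inU_x : inU (wrd [:: lx])
| inU_y : inU (wrd [:: ly])
| inU_add c d : inU c -> inU d -> inU (c ++ d)
| inU_scal k c : inU c -> inU (scal k c)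
| inU_star c d : inU c -> inU d -> inU (star c d)
| inU_eq c d : ev c =1 ev d -> inU c -> inU d.

End QShuffle.

Definition alternating (w : word) : Prop :=
  (0 < size w)%N /\
  forall i : nat, (0 < i)%N -> (i < size w)%N -> nth lx w i.-1 != nth lx w i.

From mathcomp Require Import all_boot all_order all_algebra.
From mathcomp Require Import ring zify.
Set Implicit Arguments. Unset Strict Implicit. Unset Printing Implicit Defensive.
Import Order.TTheory GRing.Theory Num.Theory.
Local Open Scope ring_scope.

(* Write [t = q^-2] and [alt a n] for the alternating word of length [n]
   starting with the letter [a].  Odd lengths come from the identity
     a * alt (~a) 2k - t alt (~a) 2k * a = (1 - t) alt a (2k+1),
   which holds because [a] commutes with [alt a (2m+1)] for every [m].
   For even lengths, the combination
     S_a = sum_(i <= m) t^i alt a (2i+1) * alt (~a) (2(m-i)+1)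
           - sum_(1 <= i <= m+1) t^i alt (~a) 2i * alt a 2(m+1-i)
   of products of shorter alternating words equals
   alt a (2m+2) + t^(m+1) alt (~a) (2m+2).  Together with [S_(~a)] this is a
   linear system with determinant 1 - t^(2m+2), which is nonzero because [q]
   is not a root of unity; so both even words lie in [U], by induction on the
   length. *)

Fixpoint alt (a : letter) (n : nat) : word :=
  if n is n'.+1 then a :: alt (~~ a) n' else [::].

Lemma alt_doubleS a k : alt a k.+1.*2 = a :: ~~ a :: alt a k.*2.
Proof. by rewrite doubleS /= negbK. Qed.

Lemma alt_eq0 a n : (alt a n == [::]) = (n == 0)%N.
Proof. by case: n. Qed.

Lemma alternating_alt (w : word) : alternating w -> w = alt (head lx w) (size w).
Proof.
case: w => [|a w] [] //= _ alt_w.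
elim: w a alt_w => [|b w IHw] a alt_w //=.
have /eqP b_def : ~~ a == b by move: (alt_w 1%N isT isT); case: (a); case: (b).
subst b; congr (_ :: _); apply: IHw => -[|i] // _ lt_i.
exact: (alt_w i.+2).
Qed.

Lemma neq_negb (a : letter) : (a == ~~ a) = false.
Proof. by case: a. Qed.

Lemma negb_neq (a : letter) : (~~ a == a) = false.
Proof. by case: a. Qed.

Lemma pair_negb a : pair a (~~ a) = - 2.
Proof. by case: a. Qed.

Lemma sum_pair_alt_even a b k : \sum_(e <- alt a k.*2) pair e b = 0.
Proof.
elim: k a => [|k IHk] a; first by rewrite big_nil.
by rewrite alt_doubleS !big_cons IHk addr0; case: (a); case: (b).
Qed.

Lemma sum_pair_alt_odd a b k : \sum_(e <- alt a k.*2.+1) pair e b = pair a b.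
Proof. by rewrite /= big_cons sum_pair_alt_even addr0. Qed.

Section QShuffleCoefficients.
Variables (F : fieldType) (q : F).

Lemma ev_nil w : ev ([::] : combo F) w = 0.
Proof. by rewrite /ev big_nil. Qed.

Lemma ev_cat (c d : combo F) w : ev (c ++ d) w = ev c w + ev d w.
Proof. by rewrite /ev big_cat. Qed.

Lemma ev_flatten (s : seq (combo F)) w : ev (flatten s) w = \sum_(c <- s) ev c w.
Proof.
elim: s => [|c s IHs]; first by rewrite big_nil ev_nil.
by rewrite /= ev_cat IHs big_cons.
Qed.

Lemma ev_scal k (c : combo F) w : ev (scal k c) w = k * ev c w.
Proof.
rewrite /ev /scal big_map mulr_sumr; apply: eq_bigr => p _ /=.
by case: ifP; rewrite ?mulr0.
Qed.

Lemma ev_pre_nil a (c : combo F) : ev (pre a c) [::] = 0.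
Proof. by rewrite /ev /pre big_map big1. Qed.

Lemma ev_pre_cons a (c : combo F) b w :
  ev (pre a c) (b :: w) = (a == b)%:R * ev c w.
Proof.
rewrite /ev /pre big_map mulr_sumr; apply: eq_bigr => p _ /=.
by rewrite eqseq_cons; case: (a == b); rewrite /= ?mul1r ?mul0r.
Qed.

Lemma ev_wrd u w : ev (wrd F u) w = (u == w)%:R.
Proof. by rewrite /ev /wrd big_seq1 /=; case: ifP. Qed.

Lemma wsh_nilr u : wsh q u [::] = wrd F u.
Proof. by case: u. Qed.

Definition shcoef (u v w : word) : F := ev (wsh q u v) w.

Lemma ev_star_wrd u v w : ev (star q (wrd F u) (wrd F v)) w = shcoef u v w.
Proof. by rewrite /star /= ev_cat ev_nil addr0 ev_scal mulr1 mul1r. Qed.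

Lemma shcoef_nill v w : shcoef [::] v w = (v == w)%:R.
Proof. exact: ev_wrd. Qed.

Lemma shcoef_nilr u w : shcoef u [::] w = (u == w)%:R.
Proof. by rewrite /shcoef wsh_nilr ev_wrd. Qed.

Lemma shcoef_nil u v : shcoef u v [::] = ((u == [::]) && (v == [::]))%:R.
Proof.
case: u => [|a u]; first by rewrite shcoef_nill; case: v.
case: v => [|b v]; first by rewrite shcoef_nilr.
by rewrite /shcoef /= ev_cat ev_scal !ev_pre_nil mulr0 addr0.
Qed.

Lemma shcoef_cons u v c w :
  shcoef u v (c :: w) =
  (if u is d :: u' then (d == c)%:R * shcoef u' v w else 0) +
  (if v is d :: v' then
     (d == c)%:R * q ^ (\sum_(e <- u) pair e c) * shcoef u v' w else 0).
Proof.
case: u => [|a u].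
  case: v => [|b v]; first by rewrite shcoef_nill add0r.
  rewrite !shcoef_nill big_nil expr0z mulr1 add0r eqseq_cons.
  by case: (b == c); rewrite /= ?mul1r ?mul0r.
case: v => [|b v].
  rewrite !shcoef_nilr addr0 eqseq_cons.
  by case: (a == c); rewrite /= ?mul1r ?mul0r.
rewrite /shcoef /= ev_cat ev_scal !ev_pre_cons; congr (_ + _).
by case: eqP => [->|_]; rewrite /= ?mul1r ?mul0r ?mulr0.
Qed.

Local Notation t := (q ^ (-2)).

Hypothesis q_neq0 : q != 0.

Lemma letter_shuffle_alt a w :
  (forall k, shcoef [:: a] (alt (~~ a) k.*2) w - t * shcoef (alt (~~ a) k.*2) [:: a] w
             = (1 - t) * (alt a k.*2.+1 == w)%:R) /\
  (forall m, shcoef [:: a] (alt a m.*2.+1) w = shcoef (alt a m.*2.+1) [:: a] w).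
Proof.
elim: w => [|c w [IHeven IHodd]].
  by split=> k; rewrite !shcoef_nil //= andbF mulr0 subr0 mulr0.
have [->|/negPf neq_ca] := eqVneq c a; last first.
  have -> : c = ~~ a by move: neq_ca; case: (a); case: (c).
  split=> [[|k]|m].
  - by rewrite !shcoef_cons /= neq_negb eqseq_cons neq_negb !mul0r /= !addr0 !mulr0 subr0.
  - rewrite [alt (~~ a) _]alt_doubleS !shcoef_cons negbK eqxx neq_negb.
    rewrite !mul0r !mul1r big_seq1 pair_negb add0r addr0 -/(alt a k.*2.+1) IHodd.
    by rewrite eqseq_cons neq_negb /= mulr0 subrr.
  - by rewrite !shcoef_cons /= neq_negb !mul0r add0r.
split=> [[|k]|m].
- rewrite !shcoef_cons eqxx !mul1r big_nil expr0z mul1r shcoef_nill.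
  by rewrite eqseq_cons eqxx /=; ring.
- rewrite [alt (~~ a) _]alt_doubleS !shcoef_cons -(alt_doubleS (~~ a) k).
  rewrite eqxx negb_neq !mul1r !mul0r add0r addr0 sum_pair_alt_even expr0z mul1r.
  rewrite shcoef_nill shcoef_nilr /= eqseq_cons eqxx /=; ring.
- (* [q^2 t = 1] turns the even identity at [w] into the odd one at [a :: w] *)
  rewrite /= !shcoef_cons eqxx !mul1r big_seq1 big_cons sum_pair_alt_even addr0.
  rewrite /pair eqxx shcoef_nill shcoef_nilr.
  have -> : shcoef [:: a] (alt (~~ a) m.*2) w =
      t * shcoef (alt (~~ a) m.*2) [:: a] w + (1 - t) * (alt a m.*2.+1 == w)%:R.
    by rewrite -IHeven; ring.
  by rewrite -[q ^ 2]/(q ^+ 2) -[t]/((q ^+ 2)^-1) /=; field.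
Qed.

Lemma shcoef_alt_even_cons a i j w :
  shcoef (alt (~~ a) i.*2) (alt a j.*2) (a :: w) =
  (0 < j)%:R * shcoef (alt (~~ a) i.*2) (alt (~~ a) j.-1.*2.+1) w.
Proof.
rewrite shcoef_cons.
have -> : (if alt (~~ a) i.*2 is d :: u' then (d == a)%:R * shcoef u' (alt a j.*2) w
           else 0) = 0.
  by case: i => [|i] //; rewrite alt_doubleS negb_neq mul0r.
rewrite add0r; case: j => [|j]; first by rewrite mul0r.
by rewrite alt_doubleS eqxx sum_pair_alt_even expr0z /= !mul1r negbK.
Qed.

Lemma shcoef_alt_even_consN a i j w :
  shcoef (alt (~~ a) i.*2) (alt a j.*2) (~~ a :: w) =
  (0 < i)%:R * shcoef (alt a i.-1.*2.+1) (alt a j.*2) w.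
Proof.
rewrite shcoef_cons.
have -> : (if alt a j.*2 is d :: v' then
             (d == ~~ a)%:R * q ^ (\sum_(e <- alt (~~ a) i.*2) pair e (~~ a)) *
             shcoef (alt (~~ a) i.*2) v' w
           else 0) = 0.
  by case: j => [|j] //; rewrite alt_doubleS neq_negb !mul0r.
rewrite addr0; case: i => [|i]; first by rewrite mul0r.
by rewrite alt_doubleS eqxx /= negbK mul1r.
Qed.

Lemma shcoef_alt_odd_cons a i j w :
  shcoef (alt a i.*2.+1) (alt (~~ a) j.*2.+1) (a :: w) =
  shcoef (alt (~~ a) i.*2) (alt (~~ a) j.*2.+1) w.
Proof. by rewrite shcoef_cons /= eqxx negb_neq mul1r !mul0r addr0. Qed.

Lemma shcoef_alt_odd_consN a i j w :
  shcoef (alt a i.*2.+1) (alt (~~ a) j.*2.+1) (~~ a :: w) =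
  t * shcoef (alt a i.*2.+1) (alt a j.*2) w.
Proof.
rewrite shcoef_cons /= neq_negb eqxx mul0r add0r mul1r negbK -/(alt a i.*2.+1).
by rewrite sum_pair_alt_odd pair_negb.
Qed.

(* Peeling off the first letter of [w] matches the summands of the two sides
   one to one (up to an index shift when that letter is [~~ a]). *)
Lemma alt_shuffle_sums a m w :
  \sum_(0 <= i < m.+2) t ^+ i * shcoef (alt (~~ a) i.*2) (alt a (m.+1 - i).*2) w =
  \sum_(0 <= i < m.+1) t ^+ i * shcoef (alt a i.*2.+1) (alt (~~ a) (m - i).*2.+1) w.
Proof.
rewrite !big_mkord; case: w => [|c w].
  rewrite big1 ?big1 // => i _; rewrite shcoef_nil ?alt_eq0 //= ?mulr0 //.
  by case: (nat_of_ord i) => [|k]; rewrite /= ?subn0 mulr0.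
have [->|/negPf neq_ca] := eqVneq c a; last first.
  have -> : c = ~~ a by move: neq_ca; case: (a); case: (c).
  rewrite big_ord_recl shcoef_alt_even_consN mul0r mulr0 add0r.
  apply: eq_bigr => i _.
  rewrite shcoef_alt_odd_consN shcoef_alt_even_consN mul1r exprS /= subSS.
  by rewrite mulrA [t ^+ i * _]mulrC.
rewrite big_ord_recr shcoef_alt_even_cons /= subnn mul0r mulr0 addr0.
apply: eq_bigr => i _.
rewrite shcoef_alt_odd_cons shcoef_alt_even_cons /= subn_gt0 ltnS (leq_ord i) mul1r.
by rewrite subSn ?(leq_ord i).
Qed.

Definition even_alt_combo a m : combo F :=
  flatten [seq scal (t ^+ i) (star q (wrd F (alt a i.*2.+1))
                                     (wrd F (alt (~~ a) (m - i).*2.+1)))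
          | i <- iota 0 m.+1] ++
  flatten [seq scal (- t ^+ i.+1) (star q (wrd F (alt (~~ a) i.+1.*2))
                                          (wrd F (alt a (m - i).*2)))
          | i <- iota 0 m].

Lemma ev_even_alt_combo a m w :
  ev (even_alt_combo a m) w =
  (alt a m.+1.*2 == w)%:R + t ^+ m.+1 * (alt (~~ a) m.+1.*2 == w)%:R.
Proof.
have sums := alt_shuffle_sums a m w.
rewrite big_nat_recl // big_nat_recr // subn0 subnn double0 expr0 mul1r in sums.
rewrite shcoef_nill shcoef_nilr /index_iota !subn0 in sums.
rewrite /even_alt_combo ev_cat !ev_flatten !big_map.
under eq_bigr => i _ do rewrite ev_scal ev_star_wrd.
under [X in _ + X]eq_bigr => i _ do rewrite ev_scal ev_star_wrd mulNr -subSS.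
by rewrite sumrN -sums addrA addrAC addrK.
Qed.

End QShuffleCoefficients.

Section SubalgebraU.
Variables (F : fieldType) (q : F).
Hypothesis q_neq0 : q != 0.
Hypothesis q_not_root1 : forall n : nat, (0 < n)%N -> q ^+ n != 1.

Local Notation t := (q ^ (-2)).
Local Notation inU := (inU q).

Lemma one_sub_tpow_neq0 n : (0 < n)%N -> 1 - t ^+ n != 0.
Proof.
move=> n_gt0; rewrite subr_eq0 eq_sym -[t]/((q ^+ 2)^-1) exprVn -exprM invr_eq1.
by apply: q_not_root1; rewrite muln_gt0 n_gt0.
Qed.

Lemma inU_nil : inU ([::] : combo F).
Proof.
apply: (@inU_eq _ _ (scal 0 (wrd F [::]))); last exact/inU_scal/inU_one.
by move=> w; rewrite ev_scal mul0r ev_nil.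
Qed.

Lemma inU_flatten_map (f : nat -> combo F) s :
  (forall i, i \in s -> inU (f i)) -> inU (flatten [seq f i | i <- s]).
Proof.
elim: s => [|i s IHs] fsU /=; first exact: inU_nil.
apply: inU_add; first by apply: fsU; rewrite inE eqxx.
by apply: IHs => j js; apply: fsU; rewrite inE js orbT.
Qed.

Lemma inU_letter a : inU (wrd F [:: a]).
Proof. by case: a; [exact: inU_x | exact: inU_y]. Qed.

Lemma inU_alt_odd a k :
  inU (wrd F (alt (~~ a) k.*2)) -> inU (wrd F (alt a k.*2.+1)).
Proof.
move=> altU.
pose c := scal (1 - t)^-1 (star q (wrd F [:: a]) (wrd F (alt (~~ a) k.*2)) ++
            scal (- t) (star q (wrd F (alt (~~ a) k.*2)) (wrd F [:: a]))).
apply: (@inU_eq _ _ c).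
  move=> w; rewrite ev_scal ev_cat ev_scal !ev_star_wrd ev_wrd mulNr.
  rewrite ((letter_shuffle_alt q_neq0 a w).1 k) mulrA mulVf ?mul1r //.
  by rewrite -[t]expr1 one_sub_tpow_neq0.
by apply/inU_scal/inU_add; last apply: inU_scal;
  apply: inU_star => //; apply: inU_letter.
Qed.

Lemma inU_even_alt_combo a m :
  (forall n b, (n < m.+1.*2)%N -> inU (wrd F (alt b n))) ->
  inU (even_alt_combo q a m).
Proof.
move=> altU; apply: inU_add; apply: inU_flatten_map => i;
  rewrite mem_iota add0n => /andP[_ lt_im]; apply/inU_scal/inU_star;
  apply: altU; rewrite -!muln2; lia.
Qed.

Lemma inU_alt_even a m :
  (forall n b, (n < m.+1.*2)%N -> inU (wrd F (alt b n))) ->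
  inU (wrd F (alt a m.+1.*2)).
Proof.
move=> altU; set T := t ^+ m.+1.
pose c := scal (1 - T ^+ 2)^-1 (even_alt_combo q a m ++
                                scal (- T) (even_alt_combo q (~~ a) m)).
apply: (@inU_eq _ _ c); last first.
  by apply/inU_scal/inU_add; last apply: inU_scal; apply: inU_even_alt_combo.
move=> w; rewrite ev_scal ev_cat ev_scal !ev_even_alt_combo negbK ev_wrd.
have det_neq0 : 1 - T ^+ 2 != 0 by rewrite -exprM one_sub_tpow_neq0.
set A := (_ == w)%:R; set B := (_ == w)%:R; rewrite -/T.
by field.
Qed.

Lemma inU_alt n a : inU (wrd F (alt a n)).
Proof.
elim/ltn_ind: n a => -[_ a|n IHn a]; first exact: inU_one.
have [odd_n|even_n] := boolP (odd n).
- have n_eq : n.+1 = n./2.+1.*2.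
    by rewrite doubleS -[in LHS](odd_double_half n) odd_n.
  by rewrite n_eq; apply: inU_alt_even => k b lt_k; apply: IHn; rewrite n_eq.
- have n_eq : n = n./2.*2 by rewrite -[in LHS](odd_double_half n) (negPf even_n).
  by rewrite n_eq; apply/inU_alt_odd/IHn; rewrite -n_eq.
Qed.

End SubalgebraU.

Theorem theorem8p3 (F : fieldType) (q : F) (hq0 : q != 0)
  (hq : forall n : nat, (0 < n)%N -> q ^+ n != 1)
  (w : word) (hw : alternating w) :
  inU q (wrd F w).
Proof. by rewrite (alternating_alt hw); apply: inU_alt. Qed.
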